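(* Let $\omega\in(0,\pi/2]$ and let $S$ be a moving sofa with rotation angle $\omega$ in standard position. Then the set $\mathcal{C}(S)=P_\omega\cap\bigcap_{0\le t\le\omega}Q_S^+(t)$ is a cap with rotation angle $\omega$.
   Context: For $t\in\mathbb{R}$ put $u_t=(\cos t,\sin t)$, $v_t=(-\sin t,\cos t)$; $R_t$ is counterclockwise rotation about the origin by $t$. For a nonempty compact $S$, $p_S(t)=\max_{p\in S}p\cdot u_t$; $H(t,h)=\{p:p\cdot u_t\le h\}$. The hallway is $L=L_H\cup L_V$, $L_H=(-\infty,1]\times[0,1]$, $L_V=[0,1]\times(-\infty,1]$. A moving sofa is a connected, nonempty, compact $S\subset\mathbb{R}^2$ such that some translate of $S$ lies in $L_H$ and can be moved by a continuous rigid motion inside $L$ to a subset of $L_V$; its rotation angle $\omega\in(0,\pi/2]$ is the total clockwise angle rotated (fixed data of the sofa). It is in standard position if $p_S(\omega)=p_S(\pi/2)=1$. Let $H=\mathbb{R}\times[0,1]$, $V=[0,1]\times\mathbb{R}$, $P_\omega=H\cap R_\omega(V)$, and $Q_S^+(t)=H(t,p_S(t))\cap H(t+\pi/2,p_S(t+\pi/2))$. With $J_\omega=[0,\omega]\cup[\pi/2,\pi/2+\omega]$, a cap with rotation angle $\omega$ is a nonempty compact convex set $K$ with $p_K(\omega)=p_K(\pi/2)=1$, $p_K(\pi+\omega)=p_K(3\pi/2)=0$, which is an intersection of closed half-planes $H(t,h)$ with $t\in J_\omega\cup\{\pi+\omega,3\pi/2\}$. *)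

From HB Require Import structures.
From mathcomp Require Import all_boot all_order all_algebra.
From mathcomp Require Import all_classical all_reals all_analysis.
Set Implicit Arguments. Unset Strict Implicit. Unset Printing Implicit Defensive.
Import Order.TTheory GRing.Theory Num.Theory.
Import numFieldNormedType.Exports.
Local Open Scope classical_set_scope.
Local Open Scope ring_scope.

Section Sofa.
Variable R : realType.
Local Notation pt := (R * R)%type.

Definition dotu (t : R) (p : pt) : R := p.1 * cos t + p.2 * sin t.

Definition rot (t : R) (p : pt) : pt :=
  (cos t * p.1 - sin t * p.2, sin t * p.1 + cos t * p.2).

(* support function p_S(t) = max_{p in S} p . u_t (a sup; it is a max for
   nonempty compact S) *)
Definition supp (S : set pt) (t : R) : R := sup [set dotu t p | p in S].

Definition hplane (t h : R) : set pt := [set p | dotu t p <= h].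

Definition LH : set pt := [set p | p.1 <= 1 /\ 0 <= p.2 <= 1].
Definition LV : set pt := [set p | 0 <= p.1 <= 1 /\ p.2 <= 1].
Definition Lhall : set pt := LH `|` LV.

(* Moving sofa with rotation angle omega: a continuous rigid motion
   g_s(p) = rot (- theta s) p + x s, s in [0,1], (orientation preserving,
   the angle theta being a continuous lift), starting as a pure translation
   (theta 0 = 0) carrying S into L_H, staying in L, ending in L_V, with
   total clockwise rotation theta 1 - theta 0 = omega. *)
Definition moving_sofa (omega : R) (S : set pt) : Prop :=
  [/\ S !=set0, compact S, connected S &
   exists (theta : R -> R) (x : R -> pt),
     [/\ {within `[0, 1]%classic, continuous theta},
         {within `[0, 1]%classic, continuous x},
         theta 0 = 0, theta 1 = omega &
         forall s, 0 <= s <= 1 -> forall p, S p ->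
           Lhall (rot (- theta s) p + x s)
           /\ (s = 0 -> LH (rot (- theta s) p + x s))
           /\ (s = 1 -> LV (rot (- theta s) p + x s))]].

Definition standard_position (omega : R) (S : set pt) : Prop :=
  supp S omega = 1 /\ supp S (pi / 2) = 1.

Definition Hstrip : set pt := [set p | 0 <= p.2 <= 1].
Definition Vstrip : set pt := [set p | 0 <= p.1 <= 1].
Definition Pom (omega : R) : set pt := Hstrip `&` (rot omega @` Vstrip).

Definition Qplus (S : set pt) (t : R) : set pt :=
  hplane t (supp S t) `&` hplane (t + pi / 2) (supp S (t + pi / 2)).

Definition capC (omega : R) (S : set pt) : set pt :=
  Pom omega `&` \bigcap_(t in [set t | 0 <= t <= omega]) Qplus S t.

Definition convex_pt (K : set pt) : Prop :=
  forall p q, K p -> K q -> forall l : R, 0 <= l <= 1 ->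
    K (l *: p + (1 - l) *: q).

Definition Jom (omega : R) : set R :=
  [set t | (0 <= t <= omega) \/ (pi / 2 <= t <= pi / 2 + omega)].

Definition cap_angle (omega : R) (K : set pt) : Prop :=
  [/\ K !=set0, compact K, convex_pt K,
      ((supp K omega = 1 /\ supp K (pi / 2) = 1) /\
       (supp K (pi + omega) = 0 /\ supp K (3 * pi / 2) = 0)) &
      exists F : set (R * R),
        (forall th, F th -> Jom omega th.1 \/ th.1 = pi + omega \/ th.1 = 3 * pi / 2)
        /\ K = \bigcap_(th in F) hplane th.1 th.2].

End Sofa.

From mathcomp Require Import all_boot all_order all_algebra.
From mathcomp Require Import all_classical all_reals all_analysis.
From mathcomp Require Import ring lra.
Set Implicit Arguments. Unset Strict Implicit. Unset Printing Implicit Defensive.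
Import Order.TTheory GRing.Theory Num.Theory.
Import numFieldNormedType.Exports.
Local Open Scope classical_set_scope.
Local Open Scope ring_scope.

(** The cap C(S) is cut out by the half-planes H(t, p_S(t)) and H(t + pi/2, p_S(t + pi/2)),
    0 <= t <= omega, together with the four half-planes bounding the parallelogram P_omega;
    their normals all lie in J_omega or are pi + omega, 3 pi/2, so C(S) is closed and convex.
    Its constraints at t = 0 and t = omega confine it to a box, hence it is compact.
    The initial and final positions of the motion put S inside P_omega, so S is a subset of
    C(S) and the supporting values 1 at omega and pi/2 pass from S to C(S).  The values 0 at
    pi + omega and 3 pi/2 are attained at two projections of points of S: a point c with
    c . u_omega = 1 projected vertically onto the x-axis, and a point with y = 1 projected
    orthogonally onto the line p . u_omega = 0.  Neither projection increases p . u_t for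
    the angles t constrained by C(S), so both projections stay in C(S). *)

Section PlaneGeometry.
Variable R : realType.
Local Notation pt := (R * R)%type.

Lemma cos_3pihalf : cos (3 * pi / 2 : R) = 0.
Proof.
have -> : (3 * pi / 2 : R) = pi / 2 + pi by field.
by rewrite cosDpi cos_pihalf oppr0.
Qed.

Lemma sin_3pihalf : sin (3 * pi / 2 : R) = -1.
Proof.
have -> : (3 * pi / 2 : R) = pi / 2 + pi by field.
by rewrite sinDpi sin_pihalf.
Qed.

Lemma dotu0 (p : pt) : dotu 0 p = p.1.
Proof. by rewrite /dotu cos0 sin0; lra. Qed.

Lemma dotu_pihalf (p : pt) : dotu (pi / 2) p = p.2.
Proof. by rewrite /dotu cos_pihalf sin_pihalf; lra. Qed.

Lemma dotu_3pihalf (p : pt) : dotu (3 * pi / 2) p = - p.2.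
Proof. by rewrite /dotu cos_3pihalf sin_3pihalf; lra. Qed.

Lemma dotu_piD (t : R) (p : pt) : dotu (pi + t) p = - dotu t p.
Proof. by rewrite /dotu (addrC pi t) cosDpi sinDpi; lra. Qed.

Lemma fst_dotu_decomp (t : R) (p : pt) :
  p.1 = dotu t p * cos t - dotu (t + pi / 2) p * sin t.
Proof.
rewrite /dotu cosDpihalf sinDpihalf.
transitivity (p.1 * (cos t ^+ 2 + sin t ^+ 2)); first by rewrite cos2Dsin2 mulr1.
by ring.
Qed.

Lemma rot0 (p : pt) : rot 0 p = p.
Proof. by case: p => a b; rewrite /rot cos0 sin0 /=; congr pair; lra. Qed.

Lemma fst_rotN (t : R) (p : pt) : (rot (- t) p).1 = dotu t p.
Proof. by rewrite /rot /dotu cosN sinN /=; ring. Qed.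

Lemma dotu_rot (t : R) (p : pt) : dotu t (rot t p) = p.1.
Proof.
rewrite /dotu /rot /=.
transitivity (p.1 * (cos t ^+ 2 + sin t ^+ 2)); first by ring.
by rewrite cos2Dsin2 mulr1.
Qed.

Lemma rotK (t : R) : cancel (rot (- t)) (@rot R t).
Proof.
case=> a b; rewrite /rot /= cosN sinN.
have h := @cos2Dsin2 R t.
by congr pair; [rewrite -[a in RHS]mul1r -h | rewrite -[b in RHS]mul1r -h]; ring.
Qed.

Lemma image_rot_Vstrip (t : R) : rot t @` @Vstrip R = [set p | 0 <= dotu t p <= 1].
Proof.
apply/seteqP; split=> [_ [q Vq <-]|p hp]; first by rewrite /= dotu_rot.
exists (rot (- t) p); last exact: rotK.
by change (0 <= (rot (- t) p).1 <= 1); rewrite fst_rotN.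
Qed.

Lemma PomE (t : R) : Pom t = [set p | 0 <= p.2 <= 1 /\ 0 <= dotu t p <= 1].
Proof. by rewrite /Pom image_rot_Vstrip. Qed.

Lemma Pom_hplanes (t : R) : Pom t =
  hplane (pi / 2) 1 `&` hplane (3 * pi / 2) 0 `&` hplane t 1 `&` hplane (pi + t) 0.
Proof.
rewrite PomE /hplane; apply/seteqP; split=> p /=;
  rewrite dotu_pihalf dotu_3pihalf dotu_piD oppr_le0 oppr_le0.
  by case=> /andP[? ?] /andP[? ?].
by case=> [[[? ?] ?] ?]; split; apply/andP.
Qed.

Lemma dotu_drop_snd (t : R) (p : pt) :
  0 <= p.2 -> 0 <= t <= pi -> dotu t (p.1, 0) <= dotu t p.
Proof.
move=> p2 /sin_ge0_pi st; rewrite /dotu /=.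
by rewrite mul0r addr0 lerDl mulr_ge0.
Qed.

Definition proj_perp (w : R) (q : pt) : pt :=
  (q.1 - dotu w q * cos w, q.2 - dotu w q * sin w).

Lemma dotu_proj_perp (t w : R) (q : pt) :
  dotu t (proj_perp w q) = dotu t q - dotu w q * cos (t - w).
Proof. by rewrite /proj_perp cosB /dotu /=; ring. Qed.

Lemma dotu_proj_perp_self (w : R) (q : pt) : dotu w (proj_perp w q) = 0.
Proof. by rewrite dotu_proj_perp subrr cos0 mulr1 subrr. Qed.

End PlaneGeometry.

Section HalfPlanes.
Variable R : realType.
Local Notation pt := (R * R)%type.

Lemma continuous_dotu (t : R) : continuous (dotu t).
Proof.
move=> p; apply: (@continuousD _ R^o _ (fun p : pt => p.1 * cos t) (fun p : pt => p.2 * sin t)).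
  by apply: (@continuousM _ _ (fun p : pt => p.1)); [exact: cvg_fst | exact: cvg_cst].
by apply: (@continuousM _ _ (fun p : pt => p.2)); [exact: cvg_snd | exact: cvg_cst].
Qed.

Lemma closed_hplane (t h : R) : closed (hplane t h).
Proof.
by apply: (proj1 (continuous_closedP _) (@continuous_dotu t) [set x | x <= h]); exact: closed_le.
Qed.

Lemma convex_hplane (t h : R) : convex_pt (hplane t h).
Proof.
move=> p q; rewrite /hplane /= => hp hq l /andP[l0 l1].
have -> : dotu t (l *: p + (1 - l) *: q) = l * dotu t p + (1 - l) * dotu t q.
  have scaleE (a b : R) : a *: b = a * b by [].
  by rewrite /dotu /= !scaleE; ring.
nra.
Qed.

Lemma convex_bigcap (I : Type) (D : set I) (K : I -> set pt) :
  (forall i, D i -> convex_pt (K i)) -> convex_pt (\bigcap_(i in D) K i).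
Proof. by move=> hK p q Kp Kq l hl i Di; exact: hK (Kp i Di) (Kq i Di) l hl. Qed.

End HalfPlanes.

Section SupportFunction.
Variable R : realType.
Local Notation pt := (R * R)%type.

Lemma supp_max (S : set pt) (t : R) (c : pt) :
  S c -> S `<=` hplane t (dotu t c) -> supp S t = dotu t c.
Proof.
move=> Sc hc; apply/le_anti/andP; split.
  by apply: ge_sup; [exists (dotu t c), c | move=> _ [q Sq <-]; exact: hc].
by apply: ub_le_sup; [exists (dotu t c) => _ [q Sq <-]; exact: hc | exists c].
Qed.

Lemma compact_supp_max (S : set pt) (t : R) :
  S !=set0 -> compact S -> exists2 c, S c & S `<=` hplane t (dotu t c).
Proof.
move=> S0 cS.
have [|c Sc hc] := @compact_EVT_max _ R (dotu t) _ S0 cS.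
  exact/continuous_subspaceT/continuous_dotu.
by exists c; [exact: set_mem | move=> p Sp; exact/hc/mem_set].
Qed.

Lemma compact_sub_hplane_supp (S : set pt) (t : R) :
  S !=set0 -> compact S -> S `<=` hplane t (supp S t).
Proof. by move=> S0 cS; have [c Sc hc] := compact_supp_max t S0 cS; rewrite (supp_max Sc hc). Qed.

Lemma supp_sandwich (S K : set pt) (t h : R) : S !=set0 -> compact S ->
  S `<=` K -> K `<=` hplane t h -> supp S t = h -> supp K t = h.
Proof.
move=> S0 cS SK Kh hS; have [c Sc hc] := compact_supp_max t S0 cS.
have c_h : dotu t c = h by rewrite -hS (supp_max Sc hc).
by rewrite -c_h; apply: supp_max (SK _ Sc) _; rewrite c_h.
Qed.

Lemma supp1_translate_strip (S : set pt) (t a : R) : S !=set0 -> compact S ->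
  supp S t = 1 -> (forall p, S p -> 0 <= dotu t p + a <= 1) ->
  forall p, S p -> 0 <= dotu t p <= 1.
Proof.
move=> S0 cS; have [c Sc hc] := compact_supp_max t S0 cS.
rewrite (supp_max Sc hc) => c1 hS p Sp.
have /andP[_ ca] := hS c Sc; have /andP[pa _] := hS p Sp; have := hc p Sp.
rewrite /hplane /=; lra.
Qed.

End SupportFunction.

Lemma moving_sofa_sub_Pom (R : realType) (omega : R) (S : set (R * R)) :
  moving_sofa omega S -> standard_position omega S -> S `<=` Pom omega.
Proof.
move=> [S0 cS _ [theta [x [_ _ theta0 theta1 hmove]]]] [supp_omega supp_pihalf].
have s0 : 0 <= (0 : R) <= 1 by rewrite lexx ler01.
have s1 : 0 <= (1 : R) <= 1 by rewrite lexx ler01.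
have start p : S p -> 0 <= dotu (pi / 2) p + (x 0).2 <= 1.
  move=> Sp; have [_ [+ _]] := hmove 0 s0 p Sp.
  by rewrite theta0 oppr0 rot0 dotu_pihalf => /(_ erefl) [].
have finish p : S p -> 0 <= dotu omega p + (x 1).1 <= 1.
  move=> Sp; have [_ [_ +]] := hmove 1 s1 p Sp.
  by rewrite theta1 -fst_rotN => /(_ erefl) [].
move=> p Sp; rewrite PomE; split; last exact: supp1_translate_strip finish p Sp.
by rewrite -dotu_pihalf; exact: supp1_translate_strip start p Sp.
Qed.

Section Cap.
Variables (R : realType) (omega : R) (S : set (R * R)).
Hypothesis omega_range : 0 < omega <= pi / 2.
Hypotheses (S0 : S !=set0) (S_compact : compact S) (S_sub_Pom : S `<=` Pom omega).
Hypotheses (supp_omega : supp S omega = 1) (supp_pihalf : supp S (pi / 2) = 1).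

Let zero_in_range : 0 <= (0 : R) <= omega.
Proof. by have /andP[/ltW -> _] := omega_range; rewrite lexx. Qed.

Let omega_in_range : 0 <= omega <= omega.
Proof. by have /andP[/ltW -> _] := omega_range; rewrite lexx. Qed.

Let angle_signs t : 0 <= t <= omega ->
  [/\ 0 <= t <= pi, 0 <= t + pi / 2 <= pi,
      0 <= cos (t - omega) & 0 <= cos (t + pi / 2 - omega)].
Proof.
have pi0 := pi_gt0 R; have /andP[w0 wpi] := omega_range.
move=> /andP[t0 tw].
by split; try apply: cos_ge0_pihalf; apply/andP; split; lra.
Qed.

Let cos_omega_ge0 : 0 <= cos omega.
Proof.
have pi0 := pi_gt0 R; have /andP[w0 wpi] := omega_range.
by apply: cos_ge0_pihalf; apply/andP; split; lra.
Qed.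

Let sin_omega_ge0 : 0 <= sin omega.
Proof. by have [/sin_ge0_pi] := angle_signs omega_in_range. Qed.

Definition cap_constraints : set (R * R) :=
  [set (pi / 2, 1); (3 * pi / 2, 0); (omega, 1); (pi + omega, 0)]
  `|` [set (t, supp S t) | t in [set t | 0 <= t <= omega]]
  `|` [set (t + pi / 2, supp S (t + pi / 2)) | t in [set t | 0 <= t <= omega]].

Lemma capC_bigcap : capC omega S = \bigcap_(th in cap_constraints) hplane th.1 th.2.
Proof.
rewrite /capC /cap_constraints !bigcap_setU !bigcap_set1 !bigcap_image.
by rewrite /Qplus bigcapI Pom_hplanes setIA.
Qed.

Lemma capCP (p : R * R) : capC omega S p <->
  [/\ 0 <= p.2 <= 1, 0 <= dotu omega p <= 1 &
      forall t, 0 <= t <= omega ->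
        dotu t p <= supp S t /\ dotu (t + pi / 2) p <= supp S (t + pi / 2)].
Proof.
by rewrite /capC PomE; split=> [[[p2 pw] hQ]|[p2 pw hQ]]; split=> // t /hQ.
Qed.

Lemma closed_capC : closed (capC omega S).
Proof. by rewrite capC_bigcap; apply: closed_bigI => th _; exact: closed_hplane. Qed.

Lemma convex_capC : convex_pt (capC omega S).
Proof. by rewrite capC_bigcap; apply: convex_bigcap => th _; exact: convex_hplane. Qed.

Lemma sub_capC : S `<=` capC omega S.
Proof.
move=> p Sp; have := S_sub_Pom Sp; rewrite PomE => -[p2 pw].
by apply/capCP; split=> // t _; split; exact: compact_sub_hplane_supp.
Qed.

Lemma capC_sub_box :
  capC omega S `<=` `[- `|supp S (omega + pi / 2)|, supp S 0] `*` `[0, 1].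
Proof.
move=> r /capCP [r2 /andP[rw _] hQ].
have [r1le _] := hQ 0 zero_in_range.
have [_ rwle] := hQ omega omega_in_range.
rewrite dotu0 in r1le; split; rewrite /= in_itv //= r1le andbT.
have := mulr_ge0 rw cos_omega_ge0; have := sin_omega_ge0; have := sin_le1 omega.
have := normr_ge0 (supp S (omega + pi / 2)); have := ler_norm (supp S (omega + pi / 2)).
rewrite (fst_dotu_decomp omega); nra.
Qed.

Lemma compact_capC : compact (capC omega S).
Proof.
apply: subclosed_compact closed_capC _ capC_sub_box.
exact: compact_setX (@segment_compact R _ _) (@segment_compact R _ _).
Qed.

Lemma capC_point_snd0 : exists2 p, capC omega S p & p.2 = 0.
Proof.
have [c Sc hc] := compact_supp_max omega S0 S_compact.
have c_top : dotu omega c = 1 by rewrite -(supp_max Sc hc).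
have := S_sub_Pom Sc; rewrite PomE => -[/andP[c2_ge0 c2_le1] _].
exists (c.1, 0) => //; apply/capCP; split.
- by rewrite lexx ler01.
- have [omega_pi _ _ _] := angle_signs omega_in_range.
  have := dotu_drop_snd c2_ge0 omega_pi.
  rewrite /dotu /= in c_top *; have := sin_le1 omega; have := sin_omega_ge0.
  by move=> *; apply/andP; split; nra.
move=> t /angle_signs [t_range tpi_range _ _]; split.
  exact: le_trans (dotu_drop_snd c2_ge0 t_range) (compact_sub_hplane_supp _ S0 S_compact Sc).
exact: le_trans (dotu_drop_snd c2_ge0 tpi_range) (compact_sub_hplane_supp _ S0 S_compact Sc).
Qed.

Lemma capC_point_perp : exists2 p, capC omega S p & dotu omega p = 0.
Proof.
have [c Sc hc] := compact_supp_max (pi / 2) S0 S_compact.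
have c2 : c.2 = 1 by rewrite -dotu_pihalf -(supp_max Sc hc).
have := S_sub_Pom Sc; rewrite PomE => -[_ /andP[cw_ge0 cw_le1]].
exists (proj_perp omega c); last exact: dotu_proj_perp_self.
apply/capCP; split.
- rewrite /= c2; have := sin_le1 omega; have := sin_omega_ge0.
  by move=> *; apply/andP; split; nra.
- by rewrite dotu_proj_perp_self lexx ler01.
move=> t /angle_signs [_ _ cos_t cos_tpi]; rewrite !dotu_proj_perp.
have := compact_sub_hplane_supp t S0 S_compact Sc.
have := compact_sub_hplane_supp (t + pi / 2) S0 S_compact Sc.
by rewrite /hplane /=; split; nra.
Qed.

Lemma supp_capC :
  (supp (capC omega S) omega = 1 /\ supp (capC omega S) (pi / 2) = 1) /\
  (supp (capC omega S) (pi + omega) = 0 /\ supp (capC omega S) (3 * pi / 2) = 0).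
Proof.
have [p Kp p_perp] := capC_point_perp; have [q Kq q2] := capC_point_snd0.
split; split.
- apply: supp_sandwich S0 S_compact sub_capC _ supp_omega.
  by move=> r /capCP [_ /andP[_ ?] _].
- apply: supp_sandwich S0 S_compact sub_capC _ supp_pihalf.
  by move=> r /capCP [/andP[_ ?] _ _]; rewrite /hplane /= dotu_pihalf.
- rewrite (supp_max Kp) dotu_piD p_perp ?oppr0 //.
  by move=> r /capCP [_ /andP[? _] _]; rewrite /hplane /= dotu_piD oppr_le0.
rewrite (supp_max Kq) dotu_3pihalf q2 ?oppr0 //.
by move=> r /capCP [/andP[? _] _ _]; rewrite /hplane /= dotu_3pihalf oppr_le0.
Qed.

Lemma cap_constraints_angles th : cap_constraints th ->
  Jom omega th.1 \/ th.1 = pi + omega \/ th.1 = 3 * pi / 2.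
Proof.
rewrite /Jom; case=> [[[[[|]|]|] ->|[t t_range <-]]|[t /andP[t0 tw] <-]] /=.
- by left; right; rewrite lexx lerDl; case/andP: zero_in_range.
- by right; right.
- by left; left.
- by right; left.
- by left; left.
- by left; right; apply/andP; split; lra.
Qed.

Lemma cap_angle_capC : cap_angle omega (capC omega S).
Proof.
split; [by have [p Kp _] := capC_point_snd0; exists p | exact: compact_capC |
  exact: convex_capC | exact: supp_capC |].
by exists cap_constraints; split; [exact: cap_constraints_angles | exact: capC_bigcap].
Qed.

End Cap.

Theorem theorem3p11 (R : realType) (omega : R) (S : set (R * R)%type) :
  0 < omega <= pi / 2 ->
  moving_sofa omega S -> standard_position omega S ->
  cap_angle omega (capC omega S).
Proof.
move=> omega_range sofa std.
have [S0 S_compact _ _] := sofa; have [supp_omega supp_pihalf] := std.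
exact: cap_angle_capC omega_range S0 S_compact (moving_sofa_sub_Pom sofa std)
  supp_omega supp_pihalf.
Qed.
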